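(* Let $G$ be a group having a finite normal subgroup $F$ such that $G/F$ is a finitely generated abelian group. If for some prime $p$ the group $G$ is residually $\mathcal{F}_p$, then $G$ is conjugacy $\mathcal{F}_p$-separable.
   Context: $\mathcal{F}_p$ denotes the class of all finite $p$-groups. $G$ is residually $\mathcal{F}_p$ if for every non-identity $a\in G$ there is a homomorphism $\varphi$ of $G$ onto a finite $p$-group with $a\varphi\neq 1$. $G$ is conjugacy $\mathcal{F}_p$-separable if whenever $a,b\in G$ are not conjugate in $G$, there is a homomorphism $\varphi$ of $G$ onto a finite $p$-group $X$ such that $a\varphi$ and $b\varphi$ are not conjugate in $X$. *)

From HB Require Import structures.
From mathcomp Require Import all_boot all_fingroup all_solvable.
Set Implicit Arguments. Unset Strict Implicit. Unset Printing Implicit Defensive.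

Local Open Scope group_scope.

Definition is_hom (G H : groupType) (f : G -> H) : Prop :=
  forall x y : G, f (x * y) = f x * f y.

Definition hom_onto_pgroup (p : nat) (G : groupType) (gT : finGroupType)
    (phi : G -> gT) : Prop :=
  [/\ is_hom phi, (forall y : gT, exists x : G, phi x = y)
    & p.-group [set: gT]].

Definition residually_Fp (p : nat) (G : groupType) : Prop :=
  forall a : G, a != 1 ->
    exists (gT : finGroupType) (phi : G -> gT),
      hom_onto_pgroup p phi /\ phi a != 1.

Definition conj_in (G : groupType) (a b : G) : Prop :=
  exists g : G, a ^ g = b.

Definition conj_Fp_separable (p : nat) (G : groupType) : Prop :=
  forall a b : G, ~ conj_in a b ->
    exists (gT : finGroupType) (phi : G -> gT),
      hom_onto_pgroup p phi /\ ~ conj_in (phi a) (phi b).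

Definition is_subgroup (G : groupType) (F : pred G) : Prop :=
  [/\ F 1, (forall x y, F x -> F y -> F (x * y)) & (forall x, F x -> F x^-1)].

Definition is_normal_subgroup (G : groupType) (F : pred G) : Prop :=
  is_subgroup F /\ forall x g : G, F x -> F (x ^ g).

Definition is_finite_set (G : groupType) (F : pred G) : Prop :=
  exists s : seq G, forall x, F x -> x \in s.

Inductive gen_by (G : groupType) (S : G -> Prop) : G -> Prop :=
| gen_el x : S x -> gen_by S x
| gen_one : gen_by S 1
| gen_mul x y : gen_by S x -> gen_by S y -> gen_by S (x * y)
| gen_inv x : gen_by S x -> gen_by S x^-1.

(* G/F is abelian (F normal): all commutators lie in F *)
Definition quotient_abelian (G : groupType) (F : pred G) : Prop :=
  forall x y : G, F [~ x, y].

(* G/F is finitely generated: finitely many cosets s_i F generate G/F,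
   i.e. G is generated by the s_i together with F *)
Definition quotient_fin_gen (G : groupType) (F : pred G) : Prop :=
  exists s : seq G, forall g : G, gen_by (fun x => x \in s \/ F x) g.

(** Let [psi] be a homomorphism onto a finite p-group that is injective on the
    finite set [F].  If [psi n = 1] then [psi [~ a, n] = 1] with [[~ a, n]] in
    [F], so [n] centralises [a]: the conjugate [a ^ g] depends only on [psi g],
    and [a] has finitely many conjugates.  A second homomorphism separates [b]
    from each of them, and the subdirect product of the two separates the
    conjugacy classes of [a] and [b]. *)

From mathcomp Require Import all_boot all_fingroup all_solvable zmodp.
From Stdlib Require Import ClassicalEpsilon.
Set Implicit Arguments. Unset Strict Implicit. Unset Printing Implicit Defensive.
Local Open Scope group_scope.

Section Hom.
Variables (G H : groupType) (f : G -> H).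
Hypothesis f_hom : is_hom f.

Lemma hom1 : f 1 = 1.
Proof. by apply: (@mulgI _ (f 1)); rewrite -f_hom !mulg1. Qed.

Lemma homV x : f x^-1 = (f x)^-1.
Proof. by apply/esym/mulg1_eq; rewrite -f_hom mulgV hom1. Qed.

Lemma homJ x y : f (x ^ y) = f x ^ f y.
Proof. by rewrite /conjg !f_hom homV. Qed.

Lemma homR x y : f [~ x, y] = [~ f x, f y].
Proof. by rewrite /commg f_hom homV homJ. Qed.

Lemma hom_eq x y : f x = f y <-> f (x^-1 * y) = 1.
Proof.
rewrite f_hom homV; split=> [-> | /mulg1_eq]; first exact: mulVg.
by rewrite invgK.
Qed.

End Hom.

Lemma trivial_hom_onto_pgroup p (G : groupType) :
  exists (gT : finGroupType) (phi : G -> gT), hom_onto_pgroup p phi.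
Proof.
exists ('I_1 : finGroupType), (fun _ => 1); split.
- by move=> x y; rewrite mulg1.
- by move=> y; exists 1; rewrite (ord1 y).
- by rewrite pgroupE cardsT card_ord.
Qed.

Section SubdirectProduct.
Variables (p : nat) (G : groupType) (gT1 gT2 : finGroupType).
Variables (phi1 : G -> gT1) (phi2 : G -> gT2).
Hypotheses (phi1_onto : hom_onto_pgroup p phi1) (phi2_onto : hom_onto_pgroup p phi2).

Let pair x : (gT1 * gT2)%type := (phi1 x, phi2 x).

Let pairM x y : pair (x * y) = pair x * pair y.
Proof.
by case: phi1_onto => phi1M _ _; case: phi2_onto => phi2M _ _; rewrite /pair phi1M phi2M.
Qed.

(* The image of [pair] is not decidable in general, hence the classical test. *)
Let image := [set z | is_left (excluded_middle_informative (exists x, pair x = z))].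

Let imageP z : reflect (exists x, pair x = z) (z \in image).
Proof. by rewrite inE; case: excluded_middle_informative => ?; constructor. Qed.

Let image_group : group_set image.
Proof.
apply/group_setP; split.
  apply/imageP; exists 1; rewrite /pair.
  by case: phi1_onto => /hom1-> _ _; case: phi2_onto => /hom1-> _ _.
move=> _ _ /imageP[x <-] /imageP[y <-].
by apply/imageP; exists (x * y); rewrite pairM.
Qed.

Let imageG := Group image_group.

Let pair_image x : pair x \in imageG.
Proof. by apply/imageP; exists x. Qed.

Lemma subdirect_hom_onto_pgroup :
  exists (gT : finGroupType) (phi : G -> gT), hom_onto_pgroup p phi /\
    forall x, phi x = 1 -> phi1 x = 1 /\ phi2 x = 1.
Proof.
exists (subg_of imageG), (fun x => subg imageG (pair x)); split; first split.
- by move=> x y; rewrite pairM subgM ?pair_image.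
- move=> u; have /imageP[x Ex] := subgP u.
  by exists x; rewrite Ex sgvalK.
- rewrite -(isog_pgroup p (isog_subg imageG)).
  apply: pgroupS (subsetT _) _.
  case: phi1_onto => _ _; case: phi2_onto => _ _.
  by rewrite !pgroupE !cardsT card_prod pnatM => -> ->.
move=> x /(congr1 sgval); rewrite subgK ?pair_image // => -[e1 e2].
by split; [rewrite e1 | rewrite e2].
Qed.

End SubdirectProduct.

Lemma residually_Fp_seq p (G : groupType) : residually_Fp p G ->
  forall s : seq G, {in s, forall x, x != 1} ->
  exists (gT : finGroupType) (phi : G -> gT),
    hom_onto_pgroup p phi /\ {in s, forall x, phi x != 1}.
Proof.
move=> resG; elim=> [|x s IHs] s_nt.
  by have [gT [phi phi_onto]] := trivial_hom_onto_pgroup p G; exists gT, phi.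
have [|gT1 [phi1 [phi1_onto phi1_s]]] := IHs.
  by move=> y s_y; rewrite s_nt // inE s_y orbT.
have [gT2 [phi2 [phi2_onto phi2_x]]] := resG x (s_nt x (mem_head x s)).
have [gT [phi [phi_onto phi_ker]]] := subdirect_hom_onto_pgroup phi1_onto phi2_onto.
exists gT, phi; split => // y; rewrite inE => /predU1P[-> | s_y];
  apply/eqP => /phi_ker[k1 k2].
- by rewrite k2 eqxx in phi2_x.
- by have := phi1_s y s_y; rewrite k1 eqxx.
Qed.

Lemma residually_Fp_inj_on_finite p (G : groupType) (F : pred G) :
  residually_Fp p G -> is_finite_set F ->
  exists (gT : finGroupType) (psi : G -> gT),
    hom_onto_pgroup p psi /\ forall x, F x -> psi x = 1 -> x = 1.
Proof.
move=> resG [sF sF_F].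
have [|gT [psi [psi_onto psi_sF]]] := residually_Fp_seq resG (s := [seq x <- sF | x != 1]).
  by move=> x; rewrite mem_filter => /andP[].
exists gT, psi; split=> // x F_x psi_x; apply/eqP; apply: contraT => x_nt.
by have := psi_sF x; rewrite mem_filter x_nt sF_F // psi_x eqxx => /(_ isT).
Qed.

Lemma finite_transversal (G : groupType) (gT : finType) (f : G -> gT) :
  (forall y, exists x, f x = y) ->
  exists ts : seq G, forall g, exists2 t, t \in ts & f t = f g.
Proof.
move=> f_onto; have [sect f_sect] := fin_all_exists f_onto.
exists [seq sect y | y <- enum gT] => g.
by exists (sect (f g)); [apply: map_f; rewrite mem_enum | apply: f_sect].
Qed.

Section KernelCentral.
Variables (G H : groupType) (F : pred G) (psi : G -> H).
Hypotheses (psi_hom : is_hom psi) (G_F_abelian : quotient_abelian F).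
Hypothesis psi_inj_F : forall x, F x -> psi x = 1 -> x = 1.

Lemma ker_conjg_fix a n : psi n = 1 -> a ^ n = a.
Proof.
move=> psi_n; apply/conjg_fixP/eqP/psi_inj_F; first exact: G_F_abelian.
by rewrite homR // psi_n commg1.
Qed.

Lemma conjg_hom_eq a g t : psi t = psi g -> a ^ g = a ^ t.
Proof.
move=> psi_tg; rewrite -(mulKVg t g) conjgM ker_conjg_fix //.
by apply/hom_eq.
Qed.

End KernelCentral.

Theorem proposition4 (G : groupType) (F : pred G) :
  is_normal_subgroup F -> is_finite_set F ->
  quotient_abelian F -> quotient_fin_gen F ->
  forall p : nat, prime p ->
  residually_Fp p G -> conj_Fp_separable p G.
Proof.
move=> _ F_fin G_F_abelian _ p _ resG a b not_conj_ab.
have [gP [psi [psi_onto psi_inj_F]]] := residually_Fp_inj_on_finite resG F_fin.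
have psi_hom : is_hom psi by case: psi_onto.
have [ts ts_psi] : exists ts : seq G, forall g, exists2 t, t \in ts & psi t = psi g.
  by case: psi_onto => _ psi_surj _; apply: finite_transversal.
have [|gC [chi [chi_onto chi_sep]]] :=
  residually_Fp_seq resG (s := [seq (a ^ t)^-1 * b | t <- ts]).
  move=> _ /mapP[t _ ->]; apply/eqP => /mulg1_eq; rewrite invgK => conj_ab.
  by apply: not_conj_ab; exists t.
have [gT [phi [phi_onto phi_ker]]] := subdirect_hom_onto_pgroup psi_onto chi_onto.
exists gT, phi; split => // -[h conj_phi_ab].
have [phi_hom phi_surj _] := phi_onto.
have [g phi_g] := phi_surj h.
move: conj_phi_ab; rewrite -phi_g -homJ // => /(hom_eq phi_hom) /phi_ker[_ /eqP].
have [t ts_t /(conjg_hom_eq psi_hom G_F_abelian psi_inj_F)->] := ts_psi g.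
by apply/negP/chi_sep/map_f.
Qed.
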